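(* Let $q$ be a prime power, $m,n$ positive integers and $0\le v\le n$. For every elementary linear subspace $\mathcal V$ of $\mathrm{GF}(q^m)^n$ of dimension $v$, the rank diameter satisfies $\delta(\mathcal V)\le v$. Moreover, if $v\le m$, then $\delta(\mathcal V)=v$.
   Context: For $\mathbf x=(x_0,\dots,x_{n-1})\in\mathrm{GF}(q^m)^n$, $\mathrm{rk}(\mathbf x)$ is the dimension over $\mathrm{GF}(q)$ of the $\mathrm{GF}(q)$-span of $x_0,\dots,x_{n-1}$. A linear subspace of the $\mathrm{GF}(q^m)$-vector space $\mathrm{GF}(q^m)^n$ is elementary if it has a basis consisting of vectors in $\mathrm{GF}(q)^n$. The rank diameter of a linear subspace $\mathcal L$ is $\delta(\mathcal L)=\max_{\mathbf x\in\mathcal L}\mathrm{rk}(\mathbf x)$. *)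

From HB Require Import structures.
From mathcomp Require Import all_boot all_order all_algebra all_field.
From mathcomp Require Import boolp.
Set Implicit Arguments. Unset Strict Implicit. Unset Printing Implicit Defensive.
Import GRing.Theory.
Local Open Scope ring_scope.

(* GF(q) is modelled by a finite field F, GF(q^m) by a field extension L of F
   of degree m over F.  Vectors of GF(q^m)^n are row vectors 'rV[L]_n. *)

Definition rk (F : finFieldType) (L : fieldExtType F) (n : nat) (x : 'rV[L]_n) : nat :=
  \dim (<<[seq x ord0 i | i <- enum 'I_n]>>%VS : {vspace L}).

Definition over_base (F : finFieldType) (L : fieldExtType F) (n : nat) (x : 'rV[L]_n) : Prop :=
  forall i : 'I_n, exists c : F, x ord0 i = c%:A.

Definition elementary (F : finFieldType) (L : fieldExtType F) (n : nat)
    (V : {vspace 'rV[L]_n}) : Prop :=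
  exists b : seq 'rV[L]_n, basis_of V b /\ (forall x, x \in b -> over_base x).

(* rank diameter: max of rk over V (rk x <= n always, and rk 0 = 0) *)
Definition rank_diam (F : finFieldType) (L : fieldExtType F) (n : nat)
    (V : {vspace 'rV[L]_n}) : nat :=
  (\max_(k < n.+1 | `[< exists2 x, x \in V & rk x = k >]) k)%N.

From HB Require Import structures.
From mathcomp Require Import all_boot all_order all_algebra all_field.
From mathcomp Require Import boolp.
Set Implicit Arguments. Unset Strict Implicit. Unset Printing Implicit Defensive.
Import GRing.Theory.
Local Open Scope ring_scope.

(* An elementary space V consists of the products c B, where B is a row-free
   GF(q)-matrix with dim V rows and c ranges over GF(q^m)^(dim V).  The entries
   of c B are GF(q)-combinations of those of c, and c = (c B) D for a right
   inverse D of B over GF(q), so rk (c B) = rk c <= dim V.  If dim V <= m,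
   taking for c part of a GF(q)-basis of GF(q^m) gives rk c = dim V. *)

Section RankDiameter.
Variables (F : finFieldType) (L : fieldExtType F).

Lemma rk_le_size k (c : 'rV[L]_k) : (rk c <= k)%N.
Proof. by rewrite /rk (leq_trans (dim_span _)) // size_map size_enum_ord. Qed.

Lemma rk_free k (c : 'rV[L]_k) :
  free [seq c ord0 i | i <- enum 'I_k] -> rk c = k.
Proof. by rewrite /rk => /eqP->; rewrite size_map size_enum_ord. Qed.

Lemma rk_le_rank_diam n (V : {vspace 'rV[L]_n}) x :
  x \in V -> (rk x <= rank_diam V)%N.
Proof.
move=> xV; have rk_lt : (rk x < n.+1)%N by rewrite ltnS rk_le_size.
by apply: (leq_bigmax_cond (Ordinal rk_lt)); apply/asboolP; exists x.
Qed.

Lemma rank_diam_le n (V : {vspace 'rV[L]_n}) k :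
  (forall x, x \in V -> rk x <= k)%N -> (rank_diam V <= k)%N.
Proof. by move=> rkV; apply/bigmax_leqP => _ /asboolP[x xV <-]; apply: rkV. Qed.

Lemma exists_rk_full k : (k <= \dim (fullv : {vspace L}))%N ->
  exists c : 'rV[L]_k, rk c = k.
Proof.
move=> le_k_dim; set e := vbasis (fullv : {vspace L}).
exists (\row_(j < k) e`_j); apply: rk_free.
have -> : [seq (\row_(j < k) e`_j) ord0 i | i <- enum 'I_k] = take k e.
  rewrite -(map_nth_iota0 0) ?size_tuple // -val_enum_ord -map_comp.
  by apply: eq_map => i /=; rewrite mxE.
apply: (@catl_free _ _ (drop k e)).
by rewrite cat_take_drop (basis_free (vbasisP fullv)).
Qed.

Lemma rk_mul_base_mx k n (c : 'rV[L]_k) (B : 'M[F]_(k, n)) :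
  (rk (c *m map_mx (in_alg L) B) <= rk c)%N.
Proof.
apply: dimvS; apply/span_subvP => _ /mapP[i _ ->].
rewrite !mxE; apply: memv_suml => j _; rewrite mxE mulr_algr.
by apply/memvZ/memv_span/map_f; rewrite mem_enum.
Qed.

Lemma rk_mul_row_free k n (c : 'rV[L]_k) (B : 'M[F]_(k, n)) :
  row_free B -> rk (c *m map_mx (in_alg L) B) = rk c.
Proof.
case/row_freeP=> D BD; apply/eqP; rewrite eqn_leq rk_mul_base_mx /=.
have {1}-> : c = c *m map_mx (in_alg L) B *m map_mx (in_alg L) D.
  by rewrite -mulmxA -map_mxM BD map_mx1 mulmx1.
exact: rk_mul_base_mx.
Qed.

Section RowsMatrix.
Variables (n : nat) (t : seq 'rV[L]_n).

Let T := \matrix_(j < size t) t`_j.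

Lemma mulmx_rows (c : 'rV[L]_(size t)) :
  c *m T = \sum_(j < size t) c ord0 j *: t`_j.
Proof. by rewrite mulmx_sum_row; apply: eq_bigr => j _; rewrite rowK. Qed.

Lemma row_free_rows : free t -> row_free T.
Proof.
move=> free_t; apply: inj_row_free => u; rewrite mulmx_rows => u_t0.
have /freeP free_tt : free (in_tuple t) by [].
by apply/rowP => j; rewrite mxE (free_tt (fun j => u ord0 j)).
Qed.

Lemma memv_span_rows x : (x \in <<t>>%VS) <-> exists c, x = c *m T.
Proof.
split=> [x_t | [c ->]].
  have {}x_t : x \in <<in_tuple t>>%VS by [].
  exists (\row_j coord (in_tuple t) j x); rewrite mulmx_rows {1}(coord_span x_t).
  by apply: eq_bigr => j _; rewrite mxE.
rewrite mulmx_rows; apply: memv_suml => j _.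
exact/memvZ/memv_span/mem_nth.
Qed.

End RowsMatrix.

Lemma over_base_rows n (t : seq 'rV[L]_n) :
  (forall x, x \in t -> over_base x) ->
  exists B : 'M[F]_(size t, n), map_mx (in_alg L) B = \matrix_(j < size t) t`_j.
Proof.
move=> t_base.
have /fin_all_exists[f tf] : forall ji : 'I_(size t) * 'I_n,
    exists c : F, t`_ji.1 ord0 ji.2 = c%:A.
  by move=> [j i]; apply/t_base/mem_nth.
exists (\matrix_(j, i) f (j, i)).
by apply/matrixP => j i; rewrite !mxE (tf (j, i)).
Qed.

Lemma elementary_base_mx n (V : {vspace 'rV[L]_n}) : elementary V ->
  exists B : 'M[F]_(\dim V, n), row_free B /\
    forall x, x \in V <-> exists c, x = c *m map_mx (in_alg L) B.
Proof.
case=> b [b_basis b_base].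
have size_b : size b = \dim V.
  by rewrite -(span_basis b_basis) (eqP (basis_free b_basis)).
rewrite -size_b; have [B BT] := over_base_rows b_base.
exists B; rewrite -(row_free_map (in_alg L)) BT; split.
  exact/row_free_rows/(basis_free b_basis).
by move=> x; rewrite -(span_basis b_basis); apply: memv_span_rows.
Qed.

End RankDiameter.

Theorem proposition2 (F : finFieldType) (L : fieldExtType F) (q m n v : nat) :
  #|F| = q -> \dim (fullv : {vspace L}) = m -> (0 < m)%N -> (0 < n)%N -> (v <= n)%N ->
  forall V : {vspace 'rV[L]_n},
    elementary V -> \dim V = v ->
    (rank_diam V <= v)%N /\ ((v <= m)%N -> rank_diam V = v).
Proof.
move=> _ dimL _ _ _ V /elementary_base_mx[B [row_free_B memV]] <-.
have rkV x : x \in V -> (rk x <= \dim V)%N.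
  by case/memV=> c ->; rewrite rk_mul_row_free ?rk_le_size.
split=> [|le_dimV_m]; first exact: rank_diam_le.
apply/eqP; rewrite eqn_leq rank_diam_le //=.
have [c rk_c] : exists c : 'rV[L]_(\dim V), rk c = \dim V.
  by apply: exists_rk_full; rewrite dimL.
rewrite -{1}rk_c -(rk_mul_row_free c row_free_B).
by apply/rk_le_rank_diam/memV; exists c.
Qed.
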